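(* Let $Q\subset\mathbb{R}^3$ be a toroidal domain with universal cover $\widetilde{Q}$ and toroidal coordinates $(\zeta,x,y)$ on $\widetilde Q$. Let $\bm{B}$ be a toroidal vector field and $p$ a scalar function on $\widetilde{Q}$, with associated hypersurface pressure $p_\zeta$, toroidal flux $\varrho_\zeta$ and field-line velocity $\bm u_\zeta$ on $D$. The following are equivalent. (i) $(\bm B,p)$ solves $(\nabla\times\bm B)\times\bm B=\nabla p$, $\nabla\cdot\bm B=0$ on $\widetilde Q$, with $\bm B\cdot\bm n=0$ on $\partial\widetilde Q$ (all vector calculus with respect to $\widetilde g$, $\bm n$ the outward unit normal). (ii) For all $\zeta\in\mathbb{R}$, $\bm u_\zeta$ is tangent to $\partial D$, and $$\partial_\zeta p_\zeta+\mathcal{L}_{\bm u_\zeta}p_\zeta=0,\qquad \partial_\zeta\varrho_\zeta+\mathcal{L}_{\bm u_\zeta}\varrho_\zeta=0,$$ $$\partial_\zeta\pi_\zeta+\mathcal{L}_{\bm u_\zeta}\pi_\zeta=\frac{dp_\zeta}{n_\zeta}+d\Big(\frac{|\pi_\zeta|^2}{n_\zeta}+n_\zeta N_\zeta^2\Big),\quad \pi_\zeta=n_\zeta\,\iota_{\bm u_\zeta+\bm N_\zeta}h_\zeta,\quad n_\zeta=\frac{\varrho_\zeta}{\omega_\zeta}.$$ (iii) For all $\zeta$, $\bm u_\zeta$ is tangent to $\partial D$ and, in index notation on $D$ (indices $i,j\in\{x,y\}$, summation over repeated indices), $$\partial_\zeta p_\zeta+u^i_\zeta\partial_ip_\zeta=0,\qquad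 \partial_\zeta\big(n_\zeta N_\zeta\sqrt{\det h_\zeta}\big)+\partial_i\big(n_\zeta N_\zeta\sqrt{\det h_\zeta}\,u^i_\zeta\big)=0,$$ $$\partial_\zeta\pi_{\zeta\,i}+u^j_\zeta\partial_j\pi_{\zeta\,i}+\pi_{\zeta\,j}\partial_iu^j_\zeta=\frac{\partial_ip_\zeta}{n_\zeta}+\partial_i\Big(\frac{|\pi_\zeta|^2}{n_\zeta}+n_\zeta N_\zeta^2\Big),\quad \pi_{\zeta\,i}=n_\zeta h_{\zeta\,ij}(u^j_\zeta+N^j_\zeta).$$
   Context: $D\subset\mathbb{R}^2$ is the closed unit disc, $S^1=\mathbb{R}\bmod 2\pi$. A toroidal domain is a submanifold with boundary $Q\subset\mathbb{R}^3$ with an orientation-preserving diffeomorphism $(\zeta,x,y):Q\to S^1\times D$ (orientation $d\zeta\wedge dx\wedge dy$). $\widetilde{Q}$ is its universal cover with covering map $\mathcal P$, metric $\widetilde g=\mathcal P^*g$ ($g$ Euclidean), Riemannian volume form $\Omega$, and lifted coordinates $(\zeta,x,y):\widetilde Q\to\mathbb{R}\times D$. For $\zeta\in\mathbb{R}$, $I_\zeta(x,y)=(\zeta,x,y)$ viewed as a map $D\to\widetilde Q$. On $D$ define: hypersurface metric $h_\zeta=I_\zeta^*\widetilde g$; shift vector $\bm N_\zeta$ the vector field with $\iota_{\bm N_\zeta}h_\zeta=I_\zeta^*(\iota_{\partial_\zeta}\widetilde g)$; lapse function $N_\zeta$ with $N_\zeta^2=I_\zeta^*(\widetilde g(\partial_\zeta,\partial_\zeta))-h_\zeta(\bm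 N_\zeta,\bm N_\zeta)$; hypersurface area element $\omega_\zeta=I_\zeta^*(\iota_{\partial_\zeta}\Omega)$. $|\cdot|$ is the $h_\zeta$-norm on 1-forms, $\mathcal L$ Lie derivative, $d$ exterior derivative, $\iota$ interior product; $\varrho_\zeta/\omega_\zeta$ is the function $f$ with $\varrho_\zeta=f\omega_\zeta$. $\bm B$ is toroidal if $d\zeta(\bm B)>0$; then $p_\zeta=I_\zeta^*p$, $\varrho_\zeta=I_\zeta^*(\iota_{\bm B}\Omega)$ (nowhere vanishing), and $\bm u_\zeta$ is the vector field on $D$ with $\iota_{\bm u_\zeta}\varrho_\zeta=-I_\zeta^*(\iota_{\partial_\zeta}\iota_{\bm B}\Omega)$. *)

From Stdlib Require Import Reals ZArith List.
From Coquelicot Require Import Coquelicot.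
Open Scope R_scope.

(* Coordinates (zeta, x, y) on the universal cover  R x D.
   Index 3-type: iz = zeta, ix = x, iy = y.  Index 2-type on D: jx, jy. *)
Inductive I3 := iz | ix | iy.
Inductive I2 := jx | jy.
Definition emb (i : I2) : I3 := match i with jx => ix | jy => iy end.
Definition sum3 (f : I3 -> R) : R := f iz + f ix + f iy.
Definition sum2 (f : I2 -> R) : R := f jx + f jy.

Definition Fn3 := R -> R -> R -> R.

Definition inD (x y : R) : Prop := x ^ 2 + y ^ 2 <= 1.

Definition pd (a : I3) (f : Fn3) : Fn3 := fun z x y =>
  match a with
  | iz => Derive (fun t => f t x y) z
  | ix => Derive (fun t => f z t y) x
  | iy => Derive (fun t => f z x t) y
  end.
Definition ex_pd (a : I3) (f : Fn3) (z x y : R) : Prop :=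
  match a with
  | iz => ex_derive (fun t => f t x y) z
  | ix => ex_derive (fun t => f z t y) x
  | iy => ex_derive (fun t => f z x t) y
  end.
Fixpoint pdl (l : list I3) (f : Fn3) : Fn3 :=
  match l with nil => f | a :: l' => pd a (pdl l' f) end.

Definition smooth3 (f : Fn3) : Prop :=
  forall l : list I3,
    (forall a z x y, ex_pd a (pdl l f) z x y) /\
    (forall z x y, continuous
        (fun v : R * R * R => pdl l f (fst (fst v)) (snd (fst v)) (snd v)) (z, x, y)).

(* 3x3 linear algebra via cyclic cofactors *)
Definition succ3 (a : I3) : I3 := match a with iz => ix | ix => iy | iy => iz end.
Definition cof3 (A : I3 -> I3 -> R) (a b : I3) : R :=
  A (succ3 a) (succ3 b) * A (succ3 (succ3 a)) (succ3 (succ3 b))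
  - A (succ3 a) (succ3 (succ3 b)) * A (succ3 (succ3 a)) (succ3 b).
Definition det3 (A : I3 -> I3 -> R) : R := sum3 (fun b => A iz b * cof3 A iz b).
Definition inv3 (A : I3 -> I3 -> R) (a b : I3) : R := cof3 A b a / det3 A.
Definition det2 (A : I2 -> I2 -> R) : R := A jx jx * A jy jy - A jx jy * A jy jx.
Definition inv2 (A : I2 -> I2 -> R) (i j : I2) : R :=
  match i, j with
  | jx, jx => A jy jy / det2 A
  | jx, jy => - A jx jy / det2 A
  | jy, jx => - A jy jx / det2 A
  | jy, jy => A jx jx / det2 A
  end.

Definition eps (a b c : I3) : R :=
  match a, b, c with
  | iz, ix, iy | ix, iy, iz | iy, iz, ix => 1
  | iz, iy, ix | ix, iz, iy | iy, ix, iz => -1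
  | _, _, _ => 0
  end.

(* ---------- Toroidal domain ----------
   Phi k (k = iz,ix,iy labelling the three Euclidean coordinates of R^3) is the
   inverse of the toroidal coordinate map (zeta,x,y) : Q -> S^1 x D, lifted to
   R x D (and smoothly extended to R^3). *)
Definition toroidal_domain (Phi : I3 -> Fn3) : Prop :=
  (forall k, smooth3 (Phi k)) /\
  (forall k z x y, inD x y -> Phi k (z + 2 * PI) x y = Phi k z x y) /\
  (forall z x y z' x' y', inD x y -> inD x' y' ->
     (forall k, Phi k z x y = Phi k z' x' y') ->
     x = x' /\ y = y' /\ exists m : Z, z' = z + 2 * PI * IZR m) /\
  (forall z x y, inD x y ->
     det3 (fun k a => pd a (Phi k) z x y) > 0).

Definition gm (Phi : I3 -> Fn3) (a b : I3) : Fn3 := fun z x y =>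
  sum3 (fun k => pd a (Phi k) z x y * pd b (Phi k) z x y).
Definition gmat (Phi : I3 -> Fn3) (z x y : R) : I3 -> I3 -> R :=
  fun a b => gm Phi a b z x y.
(* sqrt(det g~): Riemannian volume form Omega = sqrtg dzeta/\dx/\dy *)
Definition sqrtg (Phi : I3 -> Fn3) : Fn3 := fun z x y => sqrt (det3 (gmat Phi z x y)).
Definition ginv (Phi : I3 -> Fn3) (a b : I3) : Fn3 := fun z x y =>
  inv3 (gmat Phi z x y) a b.

Definition lower (Phi : I3 -> Fn3) (V : I3 -> Fn3) (a : I3) : Fn3 := fun z x y =>
  sum3 (fun b => gm Phi a b z x y * V b z x y).
Definition dotg (Phi : I3 -> Fn3) (X Y : I3 -> Fn3) : Fn3 := fun z x y =>
  sum3 (fun a => sum3 (fun b => gm Phi a b z x y * X a z x y * Y b z x y)).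
Definition divg (Phi : I3 -> Fn3) (V : I3 -> Fn3) : Fn3 := fun z x y =>
  / sqrtg Phi z x y *
  sum3 (fun a => pd a (fun z' x' y' => sqrtg Phi z' x' y' * V a z' x' y') z x y).
Definition curlg (Phi : I3 -> Fn3) (V : I3 -> Fn3) (a : I3) : Fn3 := fun z x y =>
  / sqrtg Phi z x y *
  sum3 (fun b => sum3 (fun c => eps a b c * pd b (lower Phi V c) z x y)).
Definition crossg (Phi : I3 -> Fn3) (X Y : I3 -> Fn3) (a : I3) : Fn3 := fun z x y =>
  / sqrtg Phi z x y *
  sum3 (fun b => sum3 (fun c => eps a b c * lower Phi X b z x y * lower Phi Y c z x y)).
Definition gradg (Phi : I3 -> Fn3) (f : Fn3) (a : I3) : Fn3 := fun z x y =>
  sum3 (fun b => ginv Phi a b z x y * pd b f z x y).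
Definition rfun : Fn3 := fun _ x y => x ^ 2 + y ^ 2.
Definition normalg (Phi : I3 -> Fn3) (a : I3) : Fn3 := fun z x y =>
  gradg Phi rfun a z x y / sqrt (dotg Phi (gradg Phi rfun) (gradg Phi rfun) z x y).

Definition MHS (Phi : I3 -> Fn3) (B : I3 -> Fn3) (p : Fn3) : Prop :=
  (forall a z x y, inD x y -> crossg Phi (curlg Phi B) B a z x y = gradg Phi p a z x y) /\
  (forall z x y, inD x y -> divg Phi B z x y = 0) /\
  (forall z x y, x ^ 2 + y ^ 2 = 1 -> dotg Phi B (normalg Phi) z x y = 0).

Definition toroidal (B : I3 -> Fn3) : Prop :=
  forall z x y, inD x y -> B iz z x y > 0.

(* ---------- differential forms in coordinates ----------
   3D: 1-forms I3 -> Fn3, 2-forms (components w_{bc}) I3 -> I3 -> Fn3,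
   3-forms f dzeta/\dx/\dy given by the coefficient f.
   On D (parametrised by zeta): functions Fn3, vector fields / 1-forms I2 -> Fn3,
   2-forms c dx/\dy given by the coefficient c. *)
Definition dzeta_vec : I3 -> Fn3 := fun a _ _ _ =>
  match a with iz => 1 | _ => 0 end.
Definition iota3_3 (v : I3 -> Fn3) (f : Fn3) (b c : I3) : Fn3 := fun z x y =>
  sum3 (fun a => v a z x y * f z x y * eps a b c).
Definition iota3_2 (v : I3 -> Fn3) (w : I3 -> I3 -> Fn3) (c : I3) : Fn3 := fun z x y =>
  sum3 (fun a => v a z x y * w a c z x y).
Definition iota3_sym (v : I3 -> Fn3) (s : I3 -> I3 -> Fn3) (b : I3) : Fn3 := fun z x y =>
  sum3 (fun a => v a z x y * s a b z x y).
Definition pull1 (al : I3 -> Fn3) : I2 -> Fn3 := fun i => al (emb i).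
Definition pull2 (w : I3 -> I3 -> Fn3) : Fn3 := w ix iy.

Definition pdD (i : I2) (f : Fn3) : Fn3 := pd (emb i) f.
Definition dD0 (f : Fn3) : I2 -> Fn3 := fun i => pdD i f.
Definition dD1 (al : I2 -> Fn3) : Fn3 := fun z x y =>
  pdD jx (al jy) z x y - pdD jy (al jx) z x y.
Definition iotaD1 (u al : I2 -> Fn3) : Fn3 := fun z x y =>
  sum2 (fun i => u i z x y * al i z x y).
Definition iotaD2 (u : I2 -> Fn3) (c : Fn3) : I2 -> Fn3 := fun j z x y =>
  match j with jx => - (u jy z x y * c z x y) | jy => u jx z x y * c z x y end.
(* Lie derivatives via Cartan's formula L_u = iota_u d + d iota_u *)
Definition LieD0 (u : I2 -> Fn3) (f : Fn3) : Fn3 := iotaD1 u (dD0 f).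
Definition LieD1 (u al : I2 -> Fn3) : I2 -> Fn3 := fun i z x y =>
  iotaD2 u (dD1 al) i z x y + dD0 (iotaD1 u al) i z x y.
Definition LieD2 (u : I2 -> Fn3) (c : Fn3) : Fn3 := dD1 (iotaD2 u c).

Definition hD (Phi : I3 -> Fn3) (i j : I2) : Fn3 := gm Phi (emb i) (emb j).
Definition hmat (Phi : I3 -> Fn3) (z x y : R) : I2 -> I2 -> R :=
  fun i j => hD Phi i j z x y.
Definition hinv (Phi : I3 -> Fn3) (i j : I2) : Fn3 := fun z x y => inv2 (hmat Phi z x y) i j.
(* shift vector: the unique N with iota_N h = I^*(iota_{d_zeta} g~) *)
Definition shiftv (Phi : I3 -> Fn3) (i : I2) : Fn3 := fun z x y =>
  sum2 (fun j => hinv Phi i j z x y * pull1 (iota3_sym dzeta_vec (gm Phi)) j z x y).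
Definition hnorm2v (Phi : I3 -> Fn3) (V : I2 -> Fn3) : Fn3 := fun z x y =>
  sum2 (fun i => sum2 (fun j => hD Phi i j z x y * V i z x y * V j z x y)).
Definition lapse2 (Phi : I3 -> Fn3) : Fn3 := fun z x y =>
  gm Phi iz iz z x y - hnorm2v Phi (shiftv Phi) z x y.
Definition lapse (Phi : I3 -> Fn3) : Fn3 := fun z x y => sqrt (lapse2 Phi z x y).
Definition omegaD (Phi : I3 -> Fn3) : Fn3 := pull2 (iota3_3 dzeta_vec (sqrtg Phi)).
Definition rhoD (Phi : I3 -> Fn3) (B : I3 -> Fn3) : Fn3 := pull2 (iota3_3 B (sqrtg Phi)).
Definition nD (Phi : I3 -> Fn3) (B : I3 -> Fn3) : Fn3 := fun z x y =>
  rhoD Phi B z x y / omegaD Phi z x y.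
(* field-line velocity: the unique u with iota_u rho = - I^*(iota_{d_zeta} iota_B Omega);
   solving iotaD2 u rho = beta gives u^x = beta_y / rho, u^y = - beta_x / rho. *)
Definition betaD (Phi : I3 -> Fn3) (B : I3 -> Fn3) : I2 -> Fn3 := fun i z x y =>
  - pull1 (iota3_2 dzeta_vec (iota3_3 B (sqrtg Phi))) i z x y.
Definition uD (Phi : I3 -> Fn3) (B : I3 -> Fn3) (i : I2) : Fn3 := fun z x y =>
  match i with
  | jx => betaD Phi B jy z x y / rhoD Phi B z x y
  | jy => - betaD Phi B jx z x y / rhoD Phi B z x y
  end.
Definition piD (Phi : I3 -> Fn3) (B : I3 -> Fn3) (i : I2) : Fn3 := fun z x y =>
  nD Phi B z x y *
  sum2 (fun j => (uD Phi B j z x y + shiftv Phi j z x y) * hD Phi j i z x y).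
Definition hnorm2f (Phi : I3 -> Fn3) (al : I2 -> Fn3) : Fn3 := fun z x y =>
  sum2 (fun i => sum2 (fun j => hinv Phi i j z x y * al i z x y * al j z x y)).
Definition enerD (Phi : I3 -> Fn3) (B : I3 -> Fn3) : Fn3 := fun z x y =>
  hnorm2f Phi (piD Phi B) z x y / nD Phi B z x y + nD Phi B z x y * (lapse Phi z x y) ^ 2.

Definition u_tangent (Phi : I3 -> Fn3) (B : I3 -> Fn3) : Prop :=
  forall z x y, x ^ 2 + y ^ 2 = 1 ->
    x * uD Phi B jx z x y + y * uD Phi B jy z x y = 0.

Definition condII (Phi : I3 -> Fn3) (B : I3 -> Fn3) (p : Fn3) : Prop :=
  u_tangent Phi B /\
  forall z x y, inD x y ->
    pd iz p z x y + LieD0 (uD Phi B) p z x y = 0 /\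
    pd iz (rhoD Phi B) z x y + LieD2 (uD Phi B) (rhoD Phi B) z x y = 0 /\
    (forall i, pd iz (piD Phi B i) z x y + LieD1 (uD Phi B) (piD Phi B) i z x y
               = dD0 p i z x y / nD Phi B z x y + dD0 (enerD Phi B) i z x y).

Definition fluxdens (Phi : I3 -> Fn3) (B : I3 -> Fn3) : Fn3 := fun z x y =>
  nD Phi B z x y * lapse Phi z x y * sqrt (det2 (hmat Phi z x y)).
Definition condIII (Phi : I3 -> Fn3) (B : I3 -> Fn3) (p : Fn3) : Prop :=
  u_tangent Phi B /\
  forall z x y, inD x y ->
    pd iz p z x y + sum2 (fun i => uD Phi B i z x y * pdD i p z x y) = 0 /\
    pd iz (fluxdens Phi B) z x y
      + sum2 (fun i => pdD i (fun z' x' y' => fluxdens Phi B z' x' y' * uD Phi B i z' x' y') z x y)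
      = 0 /\
    (forall i,
       pd iz (piD Phi B i) z x y
       + sum2 (fun j => uD Phi B j z x y * pdD j (piD Phi B i) z x y)
       + sum2 (fun j => piD Phi B j z x y * pdD i (uD Phi B j) z x y)
       = pdD i p z x y / nD Phi B z x y + pdD i (enerD Phi B) z x y).

From Stdlib Require Import Reals Lra Psatz.
From Coquelicot Require Import Coquelicot.
Open Scope R_scope.

(* In the coordinates (zeta, x, y) every hypersurface quantity is explicit in the
   components of B: n = B^zeta, u^i = B^i / B^zeta, pi_i = B_i (covariant components)
   and rho = sqrt(det g) B^zeta.  Since N^2 is the Schur complement of h in g, also
   n N sqrt(det h) = rho and |pi|^2 / n + n N^2 = B_zeta + B^i B_i / B^zeta.
   The covariant components of (curl B) x B - grad p are
   R_a = B^c (d_c B_a - d_a B_c) - d_a p.  Multiplied by B^zeta, the pi-equation is R_i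
   and the pressure equation is B^c d_c p = - B^a R_a, so together they say R = 0.
   The rho-equation is sqrt(det g) div B, B.n vanishes exactly when x u^x + y u^y does,
   and (iii) is (ii) with the Lie derivatives written out.  The identities hold where
   B^zeta and the jacobian do not vanish, an open condition, so they can be differentiated. *)

Lemma mult_eq0_iff c r : c <> 0 -> (c * r = 0 <-> r = 0).
Proof.
  intro Hc; split; intro H; [| rewrite H; ring].
  apply (Rmult_eq_reg_l c); [rewrite H; ring | exact Hc].
Qed.

Lemma div_eq0_iff r c : c <> 0 -> (r / c = 0 <-> r = 0).
Proof. intro Hc; unfold Rdiv; rewrite Rmult_comm; apply mult_eq0_iff, Rinv_neq_0_compat, Hc. Qed.

Definition locally_dir (a : I3) (z x y : R) (P : R -> R -> R -> Prop) : Prop :=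
  match a with
  | iz => locally z (fun t => P t x y)
  | ix => locally x (fun t => P z t y)
  | iy => locally y (fun t => P z x t)
  end.

Section PartialDerivatives.
Variables (a : I3) (f g : Fn3) (z x y : R).

Lemma ex_pd_plus : ex_pd a f z x y -> ex_pd a g z x y ->
  ex_pd a (fun z x y => f z x y + g z x y) z x y.
Proof. destruct a; intros H1 H2; exact (ex_derive_plus _ _ _ H1 H2). Qed.

Lemma ex_pd_minus : ex_pd a f z x y -> ex_pd a g z x y ->
  ex_pd a (fun z x y => f z x y - g z x y) z x y.
Proof. destruct a; intros H1 H2; exact (ex_derive_minus _ _ _ H1 H2). Qed.

Lemma ex_pd_mult : ex_pd a f z x y -> ex_pd a g z x y ->
  ex_pd a (fun z x y => f z x y * g z x y) z x y.
Proof. destruct a; intros H1 H2; exact (ex_derive_mult _ _ _ H1 H2). Qed.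

Lemma ex_pd_div : ex_pd a f z x y -> ex_pd a g z x y -> g z x y <> 0 ->
  ex_pd a (fun z x y => f z x y / g z x y) z x y.
Proof. destruct a; intros H1 H2 H3; exact (ex_derive_div _ _ _ H1 H2 H3). Qed.

Lemma pd_plus : ex_pd a f z x y -> ex_pd a g z x y ->
  pd a (fun z x y => f z x y + g z x y) z x y = pd a f z x y + pd a g z x y.
Proof. destruct a; intros H1 H2; exact (Derive_plus _ _ _ H1 H2). Qed.

Lemma pd_mult : ex_pd a f z x y -> ex_pd a g z x y ->
  pd a (fun z x y => f z x y * g z x y) z x y
  = pd a f z x y * g z x y + f z x y * pd a g z x y.
Proof. destruct a; intros H1 H2; exact (Derive_mult _ _ _ H1 H2). Qed.

Lemma pd_opp : pd a (fun z x y => - f z x y) z x y = - pd a f z x y.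
Proof. destruct a; simpl; apply Derive_opp. Qed.

Lemma pd_ext_loc : locally_dir a z x y (fun z x y => f z x y = g z x y) ->
  pd a f z x y = pd a g z x y.
Proof. destruct a; simpl; apply Derive_ext_loc. Qed.

Lemma ex_pd_ext_loc : locally_dir a z x y (fun z x y => f z x y = g z x y) ->
  ex_pd a f z x y -> ex_pd a g z x y.
Proof. destruct a; simpl; apply ex_derive_ext_loc. Qed.

Lemma locally_dir_neq0 : ex_pd a f z x y -> f z x y <> 0 ->
  locally_dir a z x y (fun z x y => f z x y <> 0).
Proof.
  destruct a; intros Hd Hf; apply (ex_derive_continuous _ _ Hd (fun v => v <> 0));
  exact (open_neq 0 _ Hf).
Qed.

End PartialDerivatives.

Lemma locally_dir_imp a z x y (P Q : R -> R -> R -> Prop) :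
  (forall z x y, P z x y -> Q z x y) -> locally_dir a z x y P -> locally_dir a z x y Q.
Proof. intro H; destruct a; simpl; apply filter_imp; intros; apply H; assumption. Qed.

Lemma locally_dir_and a z x y (P Q : R -> R -> R -> Prop) :
  locally_dir a z x y P -> locally_dir a z x y Q ->
  locally_dir a z x y (fun z x y => P z x y /\ Q z x y).
Proof. destruct a; simpl; apply filter_and. Qed.

Lemma pd_iotaD1 a u al z x y :
  (forall j, ex_pd a (u j) z x y) -> (forall j, ex_pd a (al j) z x y) ->
  pd a (iotaD1 u al) z x y
  = sum2 (fun j => pd a (u j) z x y * al j z x y + u j z x y * pd a (al j) z x y).
Proof.
  intros Hu Hal; unfold iotaD1, sum2.
  rewrite pd_plus by (apply ex_pd_mult; [apply Hu | apply Hal]).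
  rewrite (pd_mult a (u jx) (al jx)), (pd_mult a (u jy) (al jy)) by auto.
  reflexivity.
Qed.

Definition sym3 (G : I3 -> I3 -> R) : Prop := forall a b, G a b = G b a.
Definition lower3 (G : I3 -> I3 -> R) (v : I3 -> R) (a : I3) : R := sum3 (fun b => G a b * v b).
Definition raise3 (G : I3 -> I3 -> R) (w : I3 -> R) (a : I3) : R :=
  sum3 (fun b => inv3 G a b * w b).
(* Coordinate curl and cross product, with the volume factor 1/sqrt(det G) kept as a
   free scalar [s]; [D b c] stands for the b-derivative of the c-th covariant component. *)
Definition curl3 (s : R) (D : I3 -> I3 -> R) (a : I3) : R :=
  s * sum3 (fun b => sum3 (fun c => eps a b c * D b c)).
Definition cross3 (G : I3 -> I3 -> R) (s : R) (v w : I3 -> R) (a : I3) : R :=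
  s * sum3 (fun b => sum3 (fun c => eps a b c * lower3 G v b * lower3 G w c)).

Lemma lower3_raise3 G w a : det3 G <> 0 -> lower3 G (raise3 G w) a = w a.
Proof. intro H; destruct a; cbv [lower3 raise3 inv3 det3 cof3 sum3 succ3] in *; field; exact H. Qed.

Lemma raise3_lower3 G v a : det3 G <> 0 -> raise3 G (lower3 G v) a = v a.
Proof. intro H; destruct a; cbv [lower3 raise3 inv3 det3 cof3 sum3 succ3] in *; field; exact H. Qed.

Lemma lower3_minus G v w a : lower3 G (fun b => v b - w b) a = lower3 G v a - lower3 G w a.
Proof. unfold lower3, sum3; ring. Qed.

Lemma lower3_cross3_curl3 G s D v a : sym3 G ->
  lower3 G (cross3 G s (curl3 s D) v) a
  = s * s * det3 G * sum3 (fun c => v c * (D c a - D a c)).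
Proof.
  intro HG.
  destruct a; cbv [lower3 cross3 curl3 det3 cof3 sum3 succ3 eps];
  rewrite ?(HG ix iz), ?(HG iy iz), ?(HG iy ix); ring.
Qed.

Lemma gm_sym Phi a b z x y : gm Phi a b z x y = gm Phi b a z x y.
Proof. unfold gm, sum3; ring. Qed.

Lemma gmat_sym Phi z x y : sym3 (gmat Phi z x y).
Proof. intros a b; apply gm_sym. Qed.

Ltac gm_normalize Phi := rewrite ?(gm_sym Phi ix iz), ?(gm_sym Phi iy iz), ?(gm_sym Phi iy ix).

Definition jacobian (Phi : I3 -> Fn3) (z x y : R) : R := det3 (fun k a => pd a (Phi k) z x y).

Section Metric.
Variables (Phi : I3 -> Fn3) (z x y : R).

Lemma det_gmat : det3 (gmat Phi z x y) = jacobian Phi z x y ^ 2.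
Proof. cbv [jacobian det3 cof3 gmat gm sum3 succ3]; ring. Qed.

Lemma sqrtg_sq : sqrtg Phi z x y * sqrtg Phi z x y = det3 (gmat Phi z x y).
Proof. apply sqrt_sqrt; rewrite det_gmat; apply pow2_ge_0. Qed.

Hypothesis Hjac : jacobian Phi z x y <> 0.

Lemma det_gmat_neq0 : det3 (gmat Phi z x y) <> 0.
Proof. rewrite det_gmat; apply pow_nonzero, Hjac. Qed.

Lemma sqrtg_neq0 : sqrtg Phi z x y <> 0.
Proof. intro E; apply det_gmat_neq0; rewrite <- sqrtg_sq, E; ring. Qed.

(* Lagrange's identity: det h = |d_x Phi x d_y Phi|^2, while the jacobian is
   d_zeta Phi . (d_x Phi x d_y Phi). *)
Lemma det_hmat_pos : 0 < det2 (hmat Phi z x y).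
Proof.
  set (c := fun k => pd ix (Phi (succ3 k)) z x y * pd iy (Phi (succ3 (succ3 k))) z x y
                     - pd ix (Phi (succ3 (succ3 k))) z x y * pd iy (Phi (succ3 k)) z x y).
  assert (Eh : det2 (hmat Phi z x y) = c iz ^ 2 + c ix ^ 2 + c iy ^ 2)
    by (cbv [c det2 hmat hD gm sum3 emb succ3]; ring).
  assert (EJ : jacobian Phi z x y = sum3 (fun k => pd iz (Phi k) z x y * c k))
    by (cbv [c jacobian det3 cof3 sum3 succ3]; ring).
  rewrite Eh; apply Rnot_le_lt; intro Hle.
  assert (c iz = 0 /\ c ix = 0 /\ c iy = 0) as (E1 & E2 & E3) by (repeat split; nra).
  apply Hjac; rewrite EJ; unfold sum3; rewrite E1, E2, E3; ring.
Qed.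

Lemma lapse2_det_hmat : lapse2 Phi z x y * det2 (hmat Phi z x y) = det3 (gmat Phi z x y).
Proof.
  generalize (Rgt_not_eq _ _ det_hmat_pos).
  cbv [lapse2 hnorm2v sum2 shiftv hinv inv2 hmat hD iota3_sym sum3 dzeta_vec emb pull1
       det2 det3 cof3 gmat succ3];
  gm_normalize Phi; intro H; field; exact H.
Qed.

Lemma lapse2_pos : 0 < lapse2 Phi z x y.
Proof.
  pose proof det_hmat_pos as Hh; pose proof lapse2_det_hmat as S.
  rewrite det_gmat in S; pose proof (pow2_gt_0 _ Hjac); nra.
Qed.

End Metric.

Lemma gmat_quad_pos Phi z x y w a :
  lower3 (gmat Phi z x y) w a <> 0 ->
  0 < sum3 (fun b => sum3 (fun c => gmat Phi z x y b c * w b * w c)).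
Proof.
  set (v := fun k => sum3 (fun b => pd b (Phi k) z x y * w b)).
  assert (Eq : sum3 (fun b => sum3 (fun c => gmat Phi z x y b c * w b * w c))
               = v iz ^ 2 + v ix ^ 2 + v iy ^ 2)
    by (cbv [v gmat gm sum3]; ring).
  assert (El : lower3 (gmat Phi z x y) w a = sum3 (fun k => pd a (Phi k) z x y * v k))
    by (cbv [v lower3 gmat gm sum3]; ring).
  rewrite Eq, El; intro Hne; apply Rnot_le_lt; intro Hle; apply Hne.
  assert (v iz = 0 /\ v ix = 0 /\ v iy = 0) as (E1 & E2 & E3) by (repeat split; nra).
  unfold sum3; rewrite E1, E2, E3; ring.
Qed.

Definition densB (Phi B : I3 -> Fn3) (a : I3) : Fn3 := fun z x y =>
  sqrtg Phi z x y * B a z x y.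

Definition transverse_energy (Phi B : I3 -> Fn3) : Fn3 := fun z x y =>
  (B ix z x y * lower Phi B ix z x y + B iy z x y * lower Phi B iy z x y) / B iz z x y.

Section CoordinateExpressions.
Variables (Phi B : I3 -> Fn3) (z x y : R).
Hypothesis Hjac : jacobian Phi z x y <> 0.
Hypothesis HBz : B iz z x y <> 0.

Let Hg : sqrtg Phi z x y <> 0 := sqrtg_neq0 Phi z x y Hjac.
Let Hh : det2 (hmat Phi z x y) <> 0 := Rgt_not_eq _ _ (det_hmat_pos Phi z x y Hjac).

Lemma rhoD_eq : rhoD Phi B z x y = B iz z x y * sqrtg Phi z x y.
Proof. cbv [rhoD pull2 iota3_3 sum3 eps]; ring. Qed.

Lemma nD_eq : nD Phi B z x y = B iz z x y.
Proof. cbv [nD rhoD omegaD pull2 iota3_3 sum3 eps dzeta_vec]; field; exact Hg. Qed.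

Lemma uD_eq i : uD Phi B i z x y = B (emb i) z x y / B iz z x y.
Proof.
  destruct i; cbv [uD betaD rhoD pull1 pull2 iota3_2 iota3_3 sum3 eps dzeta_vec emb];
  field; split; assumption.
Qed.

Lemma uD_rhoD i : uD Phi B i z x y * rhoD Phi B z x y = densB Phi B (emb i) z x y.
Proof. rewrite uD_eq, rhoD_eq; unfold densB; field; exact HBz. Qed.

Lemma piD_eq i : piD Phi B i z x y = lower Phi B (emb i) z x y.
Proof.
  unfold piD; rewrite nD_eq; generalize Hh.
  destruct i; cbv [sum2 uD betaD rhoD pull1 pull2 iota3_2 iota3_3 sum3 eps dzeta_vec emb
                   shiftv hinv inv2 hmat hD iota3_sym lower det2];
  gm_normalize Phi; intro; field; repeat split; assumption.
Qed.

Lemma iotaD1_uD_piD : iotaD1 (uD Phi B) (piD Phi B) z x y = transverse_energy Phi B z x y.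
Proof.
  unfold iotaD1, sum2, transverse_energy; rewrite !uD_eq, !piD_eq; simpl; field; exact HBz.
Qed.

Lemma enerD_eq : enerD Phi B z x y = lower Phi B iz z x y + transverse_energy Phi B z x y.
Proof.
  unfold enerD, lapse; rewrite pow2_sqrt by apply Rlt_le, lapse2_pos, Hjac.
  rewrite nD_eq; cbv [hnorm2f sum2]; rewrite !piD_eq; generalize Hh.
  cbv [transverse_energy lapse2 hnorm2v sum2 shiftv hinv inv2 hmat hD iota3_sym sum3
       dzeta_vec emb pull1 det2 lower];
  gm_normalize Phi; intro; field; split; assumption.
Qed.

Lemma fluxdens_eq_rhoD : fluxdens Phi B z x y = rhoD Phi B z x y.
Proof.
  unfold fluxdens, lapse; rewrite nD_eq, rhoD_eq, Rmult_assoc, <- sqrt_mult_alt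
    by apply Rlt_le, lapse2_pos, Hjac.
  rewrite lapse2_det_hmat by exact Hjac; reflexivity.
Qed.

End CoordinateExpressions.

Definition mhs_residual (Phi B : I3 -> Fn3) (p : Fn3) (a : I3) : Fn3 := fun z x y =>
  sum3 (fun c => B c z x y * (pd c (lower Phi B a) z x y - pd a (lower Phi B c) z x y))
  - pd a p z x y.

Lemma pd_rfun_iz z x y : pd iz rfun z x y = 0.
Proof. exact (Derive_const _ z). Qed.

Lemma pd_rfun_ix z x y : pd ix rfun z x y = 2 * x.
Proof. apply is_derive_unique; unfold rfun; auto_derive; [exact I | ring]. Qed.

Lemma pd_rfun_iy z x y : pd iy rfun z x y = 2 * y.
Proof. apply is_derive_unique; unfold rfun; auto_derive; [exact I | ring]. Qed.

Section Residuals.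
Variables (Phi B : I3 -> Fn3) (p : Fn3) (z x y : R).
Hypothesis Hjac : jacobian Phi z x y <> 0.

Lemma lower_force_residual a :
  lower3 (gmat Phi z x y)
    (fun b => crossg Phi (curlg Phi B) B b z x y - gradg Phi p b z x y) a
  = mhs_residual Phi B p a z x y.
Proof.
  change (lower3 (gmat Phi z x y)
    (fun b => cross3 (gmat Phi z x y) (/ sqrtg Phi z x y)
                (curl3 (/ sqrtg Phi z x y) (fun b c => pd b (lower Phi B c) z x y))
                (fun c => B c z x y) b
              - raise3 (gmat Phi z x y) (fun c => pd c p z x y) b) a
    = mhs_residual Phi B p a z x y).
  rewrite lower3_minus, lower3_cross3_curl3, lower3_raise3
    by (apply gmat_sym || apply det_gmat_neq0, Hjac).
  rewrite <- sqrtg_sq; unfold mhs_residual; field; apply sqrtg_neq0, Hjac.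
Qed.

Lemma force_balance_iff_residual :
  (forall a, crossg Phi (curlg Phi B) B a z x y = gradg Phi p a z x y) <->
  (forall a, mhs_residual Phi B p a z x y = 0).
Proof.
  split; intros H a.
  - rewrite <- lower_force_residual; cbv [lower3 sum3]; rewrite !H; ring.
  - apply Rminus_diag_uniq.
    rewrite <- (raise3_lower3 (gmat Phi z x y)
                 (fun b => crossg Phi (curlg Phi B) B b z x y - gradg Phi p b z x y) a)
      by apply det_gmat_neq0, Hjac.
    unfold raise3 at 1, sum3; rewrite !lower_force_residual, !H; ring.
Qed.

Lemma mhs_residual_along_B :
  sum3 (fun a => B a z x y * mhs_residual Phi B p a z x y)
  = - sum3 (fun c => B c z x y * pd c p z x y).
Proof. cbv [mhs_residual sum3]; ring. Qed.

Lemma pressure_transport_eq : B iz z x y <> 0 ->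
  B iz z x y * (pd iz p z x y + LieD0 (uD Phi B) p z x y)
  = sum3 (fun c => B c z x y * pd c p z x y).
Proof.
  intro HBz; cbv [LieD0 iotaD1 dD0 pdD sum2 sum3].
  rewrite !uD_eq by assumption; simpl; field; exact HBz.
Qed.

Lemma sqrtg_divg :
  sqrtg Phi z x y * divg Phi B z x y = sum3 (fun a => pd a (densB Phi B a) z x y).
Proof. unfold divg, densB; field; apply sqrtg_neq0, Hjac. Qed.

Lemma lower3_gradg f a : lower3 (gmat Phi z x y) (fun b => gradg Phi f b z x y) a = pd a f z x y.
Proof. exact (lower3_raise3 _ (fun c => pd c f z x y) a (det_gmat_neq0 _ _ _ _ Hjac)). Qed.

Hypothesis Hbd : x ^ 2 + y ^ 2 = 1.

Lemma norm_gradg_rfun_pos : 0 < dotg Phi (gradg Phi rfun) (gradg Phi rfun) z x y.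
Proof.
  destruct (Req_dec x 0) as [Hx | Hx].
  - apply (gmat_quad_pos Phi z x y _ iy); rewrite lower3_gradg, pd_rfun_iy.
    intro E; subst x; nra.
  - apply (gmat_quad_pos Phi z x y _ ix); rewrite lower3_gradg, pd_rfun_ix; lra.
Qed.

Lemma dotg_normalg V : dotg Phi V (normalg Phi) z x y
  = 2 * (x * V ix z x y + y * V iy z x y)
    / sqrt (dotg Phi (gradg Phi rfun) (gradg Phi rfun) z x y).
Proof.
  pose proof (sqrt_lt_R0 _ norm_gradg_rfun_pos) as Hq.
  unfold dotg at 1, normalg; set (q := sqrt _) in *.
  transitivity
    (sum3 (fun a => V a z x y * lower3 (gmat Phi z x y) (fun b => gradg Phi rfun b z x y) a) / q).
  - cbv [sum3 lower3 gmat]; field; lra.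
  - unfold sum3; rewrite !lower3_gradg, pd_rfun_iz, pd_rfun_ix, pd_rfun_iy.
    field; lra.
Qed.

Lemma normal_flux_iff_tangent : B iz z x y <> 0 ->
  (dotg Phi B (normalg Phi) z x y = 0 <-> x * uD Phi B jx z x y + y * uD Phi B jy z x y = 0).
Proof.
  intro HBz; pose proof (sqrt_lt_R0 _ norm_gradg_rfun_pos) as Hq.
  rewrite dotg_normalg, !uD_eq by assumption; simpl emb.
  replace (x * (B ix z x y / B iz z x y) + y * (B iy z x y / B iz z x y))
    with ((x * B ix z x y + y * B iy z x y) / B iz z x y) by (field; exact HBz).
  rewrite !div_eq0_iff by (exact HBz || lra); lra.
Qed.

End Residuals.

Lemma inD_boundary x y : x ^ 2 + y ^ 2 = 1 -> inD x y.
Proof. unfold inD; lra. Qed.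

Section Smooth.
Variables (Phi B : I3 -> Fn3) (p : Fn3).
Hypothesis HPhi : forall k, smooth3 (Phi k).
Hypothesis HB : forall a, smooth3 (B a).

Lemma ex_pd_B a c z x y : ex_pd a (B c) z x y.
Proof. exact (proj1 (HB c nil) a z x y). Qed.

Lemma ex_pd_dPhi a b k z x y : ex_pd a (pd b (Phi k)) z x y.
Proof. exact (proj1 (HPhi k (cons b nil)) a z x y). Qed.

Ltac solve_ex_pd := repeat lazymatch goal with
  | |- ex_pd _ (fun z x y => _ + _) _ _ _ => apply ex_pd_plus
  | |- ex_pd _ (fun z x y => _ - _) _ _ _ => apply ex_pd_minus
  | |- ex_pd _ (fun z x y => _ * _) _ _ _ => apply ex_pd_mult
  | |- ex_pd _ (pd _ (Phi _)) _ _ _ => apply ex_pd_dPhi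
  | |- ex_pd _ (fun z x y => pd _ (Phi _) z x y) _ _ _ => apply ex_pd_dPhi
  | |- ex_pd _ (B _) _ _ _ => apply ex_pd_B
  | |- ex_pd _ (fun z x y => B _ z x y) _ _ _ => apply ex_pd_B
  end.

Lemma ex_pd_gm a b c z x y : ex_pd a (gm Phi b c) z x y.
Proof. unfold gm, sum3; solve_ex_pd. Qed.

Lemma ex_pd_lower a c z x y : ex_pd a (lower Phi B c) z x y.
Proof. unfold lower, sum3; solve_ex_pd; apply ex_pd_gm. Qed.

Lemma ex_pd_jacobian a z x y : ex_pd a (jacobian Phi) z x y.
Proof. cbv [jacobian det3 cof3 sum3 succ3]; solve_ex_pd. Qed.

Lemma ex_pd_transverse_energy a z x y : B iz z x y <> 0 ->
  ex_pd a (transverse_energy Phi B) z x y.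
Proof.
  intro HBz; unfold transverse_energy; apply ex_pd_div; [| apply ex_pd_B | exact HBz].
  solve_ex_pd; apply ex_pd_lower.
Qed.

Definition regular (z x y : R) : Prop := jacobian Phi z x y <> 0 /\ B iz z x y <> 0.

Lemma locally_regular a z x y : regular z x y -> locally_dir a z x y regular.
Proof.
  intros [Hj Hb].
  exact (locally_dir_and _ _ _ _ _ _
           (locally_dir_neq0 _ _ _ _ _ (ex_pd_jacobian a z x y) Hj)
           (locally_dir_neq0 _ _ _ _ _ (ex_pd_B a iz z x y) Hb)).
Qed.

Lemma pd_ext_regular a f g z x y :
  (forall z x y, regular z x y -> f z x y = g z x y) -> regular z x y ->
  pd a f z x y = pd a g z x y.
Proof.
  intros E Hr; apply pd_ext_loc.
  exact (locally_dir_imp _ _ _ _ _ _ E (locally_regular a _ _ _ Hr)).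
Qed.

Lemma ex_pd_ext_regular a f g z x y :
  (forall z x y, regular z x y -> f z x y = g z x y) -> regular z x y ->
  ex_pd a g z x y -> ex_pd a f z x y.
Proof.
  intros E Hr; apply ex_pd_ext_loc.
  refine (locally_dir_imp _ _ _ _ _ _ _ (locally_regular a _ _ _ Hr)).
  intros z' x' y' H'; symmetry; exact (E _ _ _ H').
Qed.

Section AtRegularPoint.
Variables (z x y : R).
Hypothesis Hreg : regular z x y.

Lemma ex_pd_uD a i : ex_pd a (uD Phi B i) z x y.
Proof.
  apply (ex_pd_ext_regular a _ (fun z x y => B (emb i) z x y / B iz z x y) _ _ _);
    [intros ? ? ? [Hj Hb]; apply uD_eq; assumption | exact Hreg |].
  apply ex_pd_div; [apply ex_pd_B | apply ex_pd_B | exact (proj2 Hreg)].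
Qed.

Lemma ex_pd_piD a i : ex_pd a (piD Phi B i) z x y.
Proof.
  apply (ex_pd_ext_regular a _ (lower Phi B (emb i)) _ _ _);
    [intros ? ? ? [Hj Hb]; apply piD_eq; assumption | exact Hreg | apply ex_pd_lower].
Qed.

Lemma pd_piD a i : pd a (piD Phi B i) z x y = pd a (lower Phi B (emb i)) z x y.
Proof. apply pd_ext_regular; [intros ? ? ? [Hj Hb]; apply piD_eq; assumption | exact Hreg]. Qed.

Lemma pd_iotaD1_uD_piD a :
  pd a (iotaD1 (uD Phi B) (piD Phi B)) z x y = pd a (transverse_energy Phi B) z x y.
Proof.
  apply pd_ext_regular; [intros ? ? ? [Hj Hb]; apply iotaD1_uD_piD; assumption | exact Hreg].
Qed.

Lemma pd_enerD a : pd a (enerD Phi B) z x y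
  = pd a (lower Phi B iz) z x y + pd a (transverse_energy Phi B) z x y.
Proof.
  rewrite <- (pd_plus _ _ _ _ _ _ (ex_pd_lower a iz z x y)
                                  (ex_pd_transverse_energy a z x y (proj2 Hreg))).
  apply pd_ext_regular; [intros ? ? ? [Hj Hb]; apply enerD_eq; assumption | exact Hreg].
Qed.

Lemma pd_uD_rhoD i : pd (emb i) (fun z x y => uD Phi B i z x y * rhoD Phi B z x y) z x y
  = pd (emb i) (densB Phi B (emb i)) z x y.
Proof. apply pd_ext_regular; [intros ? ? ? [Hj Hb]; apply uD_rhoD; assumption | exact Hreg]. Qed.

Lemma pd_rhoD a : pd a (rhoD Phi B) z x y = pd a (densB Phi B iz) z x y.
Proof.
  apply pd_ext_regular; [intros ? ? ? _; rewrite rhoD_eq; unfold densB; ring | exact Hreg].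
Qed.

Lemma pd_fluxdens_uD i :
  pd (emb i) (fun z x y => fluxdens Phi B z x y * uD Phi B i z x y) z x y
  = pd (emb i) (densB Phi B (emb i)) z x y.
Proof.
  apply pd_ext_regular; [| exact Hreg]; intros ? ? ? [Hj Hb].
  rewrite fluxdens_eq_rhoD, Rmult_comm by assumption; apply uD_rhoD; assumption.
Qed.

Lemma pd_fluxdens a : pd a (fluxdens Phi B) z x y = pd a (densB Phi B iz) z x y.
Proof.
  apply pd_ext_regular; [| exact Hreg]; intros ? ? ? [Hj Hb].
  rewrite fluxdens_eq_rhoD, rhoD_eq by assumption; unfold densB; ring.
Qed.

Lemma rhoD_transport_eq :
  pd iz (rhoD Phi B) z x y + LieD2 (uD Phi B) (rhoD Phi B) z x y
  = sum3 (fun a => pd a (densB Phi B a) z x y).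
Proof.
  cbv [LieD2 dD1 pdD iotaD2]; rewrite pd_opp, pd_rhoD, !pd_uD_rhoD.
  cbv [emb sum3]; ring.
Qed.

Lemma fluxdens_transport_eq :
  pd iz (fluxdens Phi B) z x y
  + sum2 (fun i => pdD i (fun z x y => fluxdens Phi B z x y * uD Phi B i z x y) z x y)
  = sum3 (fun a => pd a (densB Phi B a) z x y).
Proof. cbv [sum2 pdD]; rewrite pd_fluxdens, !pd_fluxdens_uD; cbv [emb sum3]; ring. Qed.

Lemma LieD1_uD_piD i : LieD1 (uD Phi B) (piD Phi B) i z x y
  = sum2 (fun j => uD Phi B j z x y * pdD j (piD Phi B i) z x y)
    + sum2 (fun j => piD Phi B j z x y * pdD i (uD Phi B j) z x y).
Proof.
  unfold LieD1, dD0, pdD at 1.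
  rewrite (pd_iotaD1 _ _ _ _ _ _ (fun j => ex_pd_uD _ j) (fun j => ex_pd_piD _ j)).
  destruct i; cbv [iotaD2 dD1 sum2 pdD emb]; ring.
Qed.

Lemma momentum_residual i :
  B iz z x y * ((pd iz (piD Phi B i) z x y + LieD1 (uD Phi B) (piD Phi B) i z x y)
                - (dD0 p i z x y / nD Phi B z x y + dD0 (enerD Phi B) i z x y))
  = mhs_residual Phi B p (emb i) z x y.
Proof.
  destruct Hreg as [Hj Hb].
  unfold LieD1, dD0 at 1 2 3, pdD at 1 2 3.
  rewrite pd_iotaD1_uD_piD, pd_enerD, nD_eq by assumption.
  unfold dD1, pdD.
  destruct i; cbv [iotaD2 emb mhs_residual sum3]; rewrite !uD_eq, !pd_piD by assumption;
    cbv [emb]; field; exact Hb.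
Qed.

Lemma force_balance_iff :
  (forall a, crossg Phi (curlg Phi B) B a z x y = gradg Phi p a z x y) <->
  (pd iz p z x y + LieD0 (uD Phi B) p z x y = 0 /\
   forall i, pd iz (piD Phi B i) z x y + LieD1 (uD Phi B) (piD Phi B) i z x y
             = dD0 p i z x y / nD Phi B z x y + dD0 (enerD Phi B) i z x y).
Proof.
  destruct Hreg as [Hj Hb].
  pose proof (pressure_transport_eq Phi B p z x y Hj Hb) as Hp.
  pose proof (mhs_residual_along_B Phi B p z x y) as HBR.
  rewrite (force_balance_iff_residual Phi B p z x y Hj); split.
  - intro H; split.
    + apply (Rmult_eq_reg_l (B iz z x y)); [| exact Hb].
      rewrite Hp, <- (Ropp_involutive (sum3 _)), <- HBR; cbv [sum3]; rewrite !H; ring.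
    + intro i; apply Rminus_diag_uniq, (Rmult_eq_reg_l (B iz z x y)); [| exact Hb].
      rewrite momentum_residual, H; ring.
  - intros [HpD Hpi].
    assert (Hhor : forall i, mhs_residual Phi B p (emb i) z x y = 0)
      by (intro i; rewrite <- momentum_residual, Hpi; ring).
    intros [| |]; [| exact (Hhor jx) | exact (Hhor jy)].
    apply (Rmult_eq_reg_l (B iz z x y)); [| exact Hb].
    pose proof (Hhor jx) as Hx; pose proof (Hhor jy) as Hy; simpl emb in Hx, Hy.
    rewrite HpD in Hp; cbv [sum3] in Hp, HBR; rewrite Hx, Hy in HBR; lra.
Qed.

Lemma divergence_free_iff :
  divg Phi B z x y = 0 <-> pd iz (rhoD Phi B) z x y + LieD2 (uD Phi B) (rhoD Phi B) z x y = 0.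
Proof.
  rewrite rhoD_transport_eq, <- sqrtg_divg by exact (proj1 Hreg).
  symmetry; apply mult_eq0_iff, sqrtg_neq0, (proj1 Hreg).
Qed.

Lemma continuity_II_iff_III :
  pd iz (rhoD Phi B) z x y + LieD2 (uD Phi B) (rhoD Phi B) z x y = 0 <->
  pd iz (fluxdens Phi B) z x y
  + sum2 (fun i => pdD i (fun z x y => fluxdens Phi B z x y * uD Phi B i z x y) z x y) = 0.
Proof. rewrite rhoD_transport_eq, fluxdens_transport_eq; reflexivity. Qed.

Lemma momentum_II_iff_III i :
  pd iz (piD Phi B i) z x y + LieD1 (uD Phi B) (piD Phi B) i z x y
    = dD0 p i z x y / nD Phi B z x y + dD0 (enerD Phi B) i z x y <->
  pd iz (piD Phi B i) z x y
    + sum2 (fun j => uD Phi B j z x y * pdD j (piD Phi B i) z x y)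
    + sum2 (fun j => piD Phi B j z x y * pdD i (uD Phi B j) z x y)
    = pdD i p z x y / nD Phi B z x y + pdD i (enerD Phi B) z x y.
Proof. rewrite LieD1_uD_piD, Rplus_assoc; reflexivity. Qed.

End AtRegularPoint.

Hypothesis Hreg_D : forall z x y, inD x y -> regular z x y.

Lemma normal_flux_iff_u_tangent :
  (forall z x y, x ^ 2 + y ^ 2 = 1 -> dotg Phi B (normalg Phi) z x y = 0) <-> u_tangent Phi B.
Proof.
  split; intros H z x y Hbd; destruct (Hreg_D z x y (inD_boundary x y Hbd)) as [Hj Hb];
    apply (normal_flux_iff_tangent Phi B z x y Hj Hbd Hb), H, Hbd.
Qed.

Lemma MHS_iff_condII : MHS Phi B p <-> condII Phi B p.
Proof.
  unfold MHS, condII; rewrite <- normal_flux_iff_u_tangent; split.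
  - intros (Hforce & Hdiv & Hbd); split; [exact Hbd |]; intros z x y Hin.
    destruct (proj1 (force_balance_iff z x y (Hreg_D z x y Hin)) (fun a => Hforce a z x y Hin))
      as [Hp Hpi].
    split; [exact Hp | split; [| exact Hpi]].
    apply divergence_free_iff, Hdiv; auto.
  - intros [Hbd Hall]; split; [| split; [| exact Hbd]].
    + intros a z x y Hin; destruct (Hall z x y Hin) as (Hp & _ & Hpi).
      exact (proj2 (force_balance_iff z x y (Hreg_D z x y Hin)) (conj Hp Hpi) a).
    + intros z x y Hin; destruct (Hall z x y Hin) as (_ & Hrho & _).
      apply divergence_free_iff; auto.
Qed.

Lemma condII_iff_condIII : condII Phi B p <-> condIII Phi B p.
Proof.
  unfold condII, condIII; split; intros [Hbd Hall]; split; try exact Hbd;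
    intros z x y Hin; destruct (Hall z x y Hin) as (Hp & Hrho & Hpi);
    pose proof (Hreg_D z x y Hin) as Hr;
    (split; [exact Hp | split]);
    solve [apply continuity_II_iff_III; auto | intro i; apply momentum_II_iff_III; auto].
Qed.

End Smooth.

Theorem theorem1 (Phi : I3 -> Fn3) (B : I3 -> Fn3) (p : Fn3) :
  toroidal_domain Phi ->
  (forall a, smooth3 (B a)) -> smooth3 p ->
  toroidal B ->
  (MHS Phi B p <-> condII Phi B p) /\ (condII Phi B p <-> condIII Phi B p).
Proof.
  (* All identities are pointwise on the cover. *)
  intros (HPhi & _ & _ & Hjac) HB _ HBz.
  assert (Hreg : forall z x y, inD x y -> regular Phi B z x y)
    by (intros z x y Hin; split; [apply Rgt_not_eq, Hjac | apply Rgt_not_eq, HBz]; exact Hin).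
  split; [apply MHS_iff_condII | apply condII_iff_condIII]; assumption.
Qed.
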